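(* Consider the FlexPD-G iterates described in the context with $\alpha,\beta>0$ and integer $T\ge1$. For any $\eta_2,\eta_3>0$ and every $k\ge0$, \[\|x^{k+1,T}-x^*\|_{P_G}^2+c_2\|x^{k+1,T}-x^{k+1,T-1}\|^2+c_3\|x^k-x^*\|^2\le\|x^{k+1,T-1}-x^*\|^2-c_1\|x^{k+1,T}-x^*\|^2+\frac{\alpha}{\beta}\|\lambda^k-\lambda^*\|^2-\frac{\alpha}{\beta}\|\lambda^{k+1}-\lambda^*\|^2+\alpha\rho(B)\|x^k-x^*\|^2,\] where $P_G=2\alpha mI-\alpha(\eta_2+\eta_3)I-\alpha\beta A'A-\alpha\rho(B)I$, $c_1=1+\alpha\rho(B)$, $c_2=1-\frac{\alpha L^2}{\eta_2}$, and $c_3=\alpha\rho(B)\big(1-\frac{\rho(B)}{\eta_3}\big)$.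
   Context: Setting: $n$ agents are connected by a connected undirected graph with edge set $\mathcal E$, $\epsilon=|\mathcal E|$. For $x\in\mathbb R^n$ let $f(x)=\sum_{i=1}^n f_i(x_i)$, where each $f_i:\mathbb R\to\mathbb R$ is twice differentiable with $m\le f_i''\le L$ for constants $0<m\le L$; $\nabla f(x)=(f_1'(x_1),\dots,f_n'(x_n))'$. $A\in\mathbb R^{\epsilon\times n}$ is the edge–node incidence matrix (null space spanned by the all-ones vector). $B\in\mathbb R^{n\times n}$ is symmetric positive semidefinite with the same null space as $A$, off-diagonal entries nonzero only on edges, and $\rho(B)<m$. $x^*$ is the unique minimizer of $f$ subject to $Ax=0$ and $\lambda^*$ a Lagrange multiplier with $\nabla f(x^* )+A'\lambda^*=0$, $Ax^*=0$, $Bx^*=0$, chosen in the column space of $A$. FlexPD-G: given $\alpha,\beta>0$, $T\ge1$, $x^0$ arbitrary, $\lambda^0=0$; for $k\ge0$: $x^{k+1,0}=x^k$; for $t=1,\dots,T$, $x^{k+1,t}=x^{k+1,t-1}-\alpha\nabla f(x^{k+1,t-1})-\alpha A'\lambda^k-\alpha Bx^k$; then $x^{k+1}=x^{k+1,T}$, $\lambda^{k+1}=\lambda^k+\beta Ax^{k+1}$. Notation: $\rho(S)$ largest eigenvalue of symmetric $S$; $\|v\|_S^2:=v'Sv$ for any symmetric $S$; $\|\cdot\|$ Euclidean norm. *)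

From HB Require Import structures.
From mathcomp Require Import all_boot all_order all_algebra.
From mathcomp Require Import all_classical all_reals all_analysis.
Set Implicit Arguments. Unset Strict Implicit. Unset Printing Implicit Defensive.
Import Order.TTheory GRing.Theory Num.Theory.
Local Open Scope ring_scope.

Section FlexPD.
Variables (R : realType) (n eps : nat).

Definition adj (ends : 'I_eps -> 'I_n * 'I_n) : rel 'I_n :=
  fun i j => [exists e, (ends e == (i, j)) || (ends e == (j, i))].

Definition simple_connected_graph (ends : 'I_eps -> 'I_n * 'I_n) : Prop :=
  [/\ forall e, (ends e).1 != (ends e).2,
      forall e e', (ends e == ends e') || (ends e == ((ends e').2, (ends e').1))
                   -> e = e'
    & forall i j, connect (adj ends) i j].

Definition incidence (ends : 'I_eps -> 'I_n * 'I_n) : 'M[R]_(eps, n) :=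
  \matrix_(e, i) (if i == (ends e).1 then 1 else if i == (ends e).2 then -1 else 0).

Definition sqnorm m (v : 'cV[R]_m) : R := \sum_i v i 0 ^+ 2.
Definition wsqnorm (S : 'M[R]_n) (v : 'cV[R]_n) : R := (v^T *m S *m v) 0 0.

Definition largest_eigenvalue (S : 'M[R]_n) (r : R) : Prop :=
  eigenvalue S r /\ forall a, eigenvalue S a -> a <= r.

Definition psd (S : 'M[R]_n) : Prop := forall v : 'cV[R]_n, 0 <= wsqnorm S v.

Definition fsum (f : 'I_n -> R -> R) (x : 'cV[R]_n) : R := \sum_i f i (x i 0).
Definition grad (f : 'I_n -> R -> R) (x : 'cV[R]_n) : 'cV[R]_n :=
  \col_i (derive1 (f i) (x i 0)).

(* inner loop: x^{k+1,t} given x^k and lambda^k *)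
Fixpoint inner (f : 'I_n -> R -> R) (A : 'M[R]_(eps, n)) (B : 'M[R]_n)
    (alpha : R) (xk : 'cV[R]_n) (lam : 'cV[R]_eps) (t : nat) : 'cV[R]_n :=
  match t with
  | 0 => xk
  | t'.+1 => let y := inner f A B alpha xk lam t' in
             y - alpha *: grad f y - alpha *: (A^T *m lam) - alpha *: (B *m xk)
  end.

Fixpoint flexpd (f : 'I_n -> R -> R) (A : 'M[R]_(eps, n)) (B : 'M[R]_n)
    (alpha beta : R) (T : nat) (x0 : 'cV[R]_n) (k : nat) : 'cV[R]_n * 'cV[R]_eps :=
  match k with
  | 0 => (x0, 0)
  | k'.+1 => let p := flexpd f A B alpha beta T x0 k' in
             let x' := inner f A B alpha p.1 p.2 T in
             (x', p.2 + beta *: (A *m x'))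
  end.

End FlexPD.

From HB Require Import structures.
From mathcomp Require Import all_boot all_order all_algebra.
From mathcomp Require Import all_classical all_reals all_analysis.
From mathcomp Require Import complex ring lra.
Import Order.TTheory GRing.Theory Num.Theory.
Local Open Scope ring_scope.
Set Implicit Arguments. Unset Strict Implicit. Unset Printing Implicit Defensive.

(* Write e = x^{k+1,T} - x^*, w = x^{k+1,T} - x^{k+1,T-1}, d = x^k - x^* and
   mu = lambda^k - lambda^*.  By the KKT conditions the last inner step reads
   w = - alpha (g + A' mu + B d) with g = grad f x^{k+1,T-1} - grad f x^*, and the
   dual step reads lambda^{k+1} - lambda^* = mu + beta A e.  Expanding the squares,
   the dual cross terms alpha <A e, mu> cancel and the right-hand side minus the
   left-hand side is exactly alpha times
     (2 <e, g> - (2m - eta2) |e|^2 + L^2/eta2 |w|^2)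
   + (2 <e, B d> + eta3 |e|^2 + rho^2/eta3 |d|^2).
   The first bracket is nonnegative coordinatewise: by the mean value theorem
   g_i = h_i (e_i - w_i) with m <= h_i <= L, which makes it a sum of squares.
   The second is nonnegative because the quadratic form of B is nonnegative along
   t e + d and bounded by rho |.|^2 (spectral theorem, through the
   complexification of B); take t = eta3 / rho.  Only the KKT equations, the
   curvature bounds on the f_i and the spectral bound on B enter this one-step
   estimate. *)

Section Dot.
Variable R : realType.

Definition dot n (u v : 'cV[R]_n) : R := (u^T *m v) 0 0.

Lemma dotE n (u v : 'cV[R]_n) : dot u v = \sum_i u i 0 * v i 0.
Proof. by rewrite /dot mxE; apply: eq_bigr => i _; rewrite mxE. Qed.

Lemma dotC n (u v : 'cV[R]_n) : dot u v = dot v u.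
Proof. by rewrite !dotE; apply: eq_bigr => i _; rewrite mulrC. Qed.

Lemma dotDr n (u v w : 'cV[R]_n) : dot u (v + w) = dot u v + dot u w.
Proof. by rewrite /dot mulmxDr mxE. Qed.

Lemma dotZr n a (u v : 'cV[R]_n) : dot u (a *: v) = a * dot u v.
Proof. by rewrite /dot -scalemxAr mxE. Qed.

Lemma dotNr n (u v : 'cV[R]_n) : dot u (- v) = - dot u v.
Proof. by rewrite -scaleN1r dotZr mulN1r. Qed.

Lemma dotDl n (u v w : 'cV[R]_n) : dot (u + v) w = dot u w + dot v w.
Proof. by rewrite !(dotC _ w) dotDr. Qed.

Lemma dotZl n a (u v : 'cV[R]_n) : dot (a *: u) v = a * dot u v.
Proof. by rewrite !(dotC _ v) dotZr. Qed.

Lemma dotBr n (u v w : 'cV[R]_n) : dot u (v - w) = dot u v - dot u w.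
Proof. by rewrite dotDr dotNr. Qed.

Lemma dot_trmx m n (u : 'cV[R]_m) (M : 'M[R]_(m, n)) v :
  dot u (M *m v) = dot (M^T *m u) v.
Proof. by rewrite /dot trmx_mul trmxK mulmxA. Qed.

Lemma sqnormE n (v : 'cV[R]_n) : sqnorm v = dot v v.
Proof. by rewrite dotE; apply: eq_bigr => i _; rewrite expr2. Qed.

Lemma sqnorm_ge0 n (v : 'cV[R]_n) : 0 <= sqnorm v.
Proof. by apply: sumr_ge0 => i _; rewrite sqr_ge0. Qed.

Lemma sqnormD n (u v : 'cV[R]_n) :
  sqnorm (u + v) = sqnorm u + 2 * dot u v + sqnorm v.
Proof. by rewrite !sqnormE !dotDr !(dotC (u + v)) !dotDr (dotC v u); ring. Qed.

Lemma sqnormB n (u v : 'cV[R]_n) :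
  sqnorm (u - v) = sqnorm u - 2 * dot u v + sqnorm v.
Proof. by rewrite sqnormD dotNr !sqnormE dotNr (dotC (- v)) dotNr opprK; ring. Qed.

Lemma sqnormZ n a (v : 'cV[R]_n) : sqnorm (a *: v) = a ^+ 2 * sqnorm v.
Proof. by rewrite !sqnormE dotZr dotC dotZr; ring. Qed.

Lemma wsqnormE n (S : 'M[R]_n) v : wsqnorm S v = dot v (S *m v).
Proof. by rewrite /wsqnorm /dot mulmxA. Qed.

Lemma wsqnorm_scalar_sub_gram m n c a (M : 'M[R]_(m, n)) v :
  wsqnorm (c%:M - a *: (M^T *m M)) v = c * sqnorm v - a * sqnorm (M *m v).
Proof.
by rewrite wsqnormE mulmxBl mul_scalar_mx -scalemxAl -mulmxA dotBr !dotZr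
  dot_trmx trmxK !sqnormE.
Qed.

End Dot.

Section Curvature.
Variable R : realType.

Lemma derive1_bounded_secant (g : R -> R) (m L : R) :
  (forall x, derivable g x 1) -> (forall x, m <= derive1 g x <= L) ->
  forall a b, exists2 h, m <= h <= L & g b - g a = h * (b - a).
Proof.
move=> dg bd a b; wlog ab : a b / a <= b.
  move=> Hw; case: (lerP a b) => [/Hw//|/ltW /Hw [h hb he]].
  by exists h => //; rewrite -opprB he; ring.
have [||c _ ->] := @MVT_segment R g (derive1 g) a b ab.
- by move=> x _; rewrite derive1E; exact: derivableP.
- by apply: derivable_within_continuous => x _; exact: dg.
by exists (derive1 g c).
Qed.

Lemma curvature_young (m L h eta e a : R) : 0 <= m -> m <= h <= L -> 0 < eta ->
  0 <= 2 * (e * (h * a)) - (2 * m - eta) * e ^+ 2 + L ^+ 2 / eta * (e - a) ^+ 2.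
Proof.
move=> m_ge0 /andP[mh hL] eta_gt0.
rewrite -(pmulr_rge0 _ eta_gt0).
have -> : eta * (2 * (e * (h * a)) - (2 * m - eta) * e ^+ 2 + L ^+ 2 / eta * (e - a) ^+ 2)
   = 2 * eta * (h - m) * e ^+ 2 + (eta * e - h * (e - a)) ^+ 2
     + (L ^+ 2 - h ^+ 2) * (e - a) ^+ 2.
  by field; rewrite gt_eqF.
have hh : 0 <= L ^+ 2 - h ^+ 2 by rewrite subr_ge0 lerXn2r ?nnegrE //; lra.
have := mulr_ge0 hh (sqr_ge0 (e - a)); have := sqr_ge0 (eta * e - h * (e - a)).
have : 0 <= 2 * eta * (h - m) * e ^+ 2 by rewrite mulr_ge0 ?sqr_ge0 // mulr_ge0 //; lra.
lra.
Qed.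

Variables (n : nat) (f : 'I_n -> R -> R) (m L : R).
Hypothesis f'_derivable : forall i x, derivable (derive1 (f i)) x 1.
Hypothesis f''_bounded : forall i x, m <= derive1n 2 (f i) x <= L.
Hypothesis m_ge0 : 0 <= m.

Lemma grad_cross_ge (eta : R) (x y e : 'cV[R]_n) : 0 < eta ->
  0 <= 2 * dot e (grad f x - grad f y) - (2 * m - eta) * sqnorm e
       + L ^+ 2 / eta * sqnorm (e - (x - y)).
Proof.
move=> eta_gt0.
rewrite dotE /sqnorm !mulr_sumr -sumrB -big_split /=; apply: sumr_ge0 => i _.
rewrite !mxE; have [h hmL ->] := derive1_bounded_secant (@f'_derivable i) (f''_bounded i)
  (y i 0) (x i 0).
exact: curvature_young.
Qed.

End Curvature.

Section SpectralBound.
Local Open Scope sesquilinear_scope.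

Lemma spectral_diag_eigenvalue (C : numClosedFieldType) n (A : 'M[C]_n) j :
  A \is normalmx -> eigenvalue A (spectral_diag A 0 j).
Proof.
move=> /orthomx_spectralP A_spectral; set P := spectralmx A in A_spectral *.
have P_unit : P \in unitmx := spectral_unit A.
apply/eigenvalueP; exists (row j P).
  rewrite -row_mul {1}A_spectral !mulmxA mulmxV // mul1mx row_mul row_diag_mx.
  by rewrite -scalemxAl -rowE.
have : row j (P *m invmx P) != 0.
  rewrite mulmxV // row1; apply/negP => /eqP/rowP/(_ j)/eqP.
  by rewrite !mxE !eqxx oner_eq0.
by rewrite row_mul; apply: contraNneq => ->; rewrite mul0mx.
Qed.

Lemma hermitian_form_le (C : numClosedFieldType) n (A : 'M[C]_n) (r : C)
    (x : 'rV[C]_n) :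
  A \is hermsymmx -> (forall a, a \is Num.real -> eigenvalue A a -> a <= r) ->
  (x *m A *m x^t*) 0 0 <= r * (x *m x^t*) 0 0.
Proof.
move=> A_herm ev_le; have A_normal := hermitian_normalmx A_herm.
have /orthomx_spectralP A_spectral := A_normal.
set P := spectralmx A in A_spectral *; set D := spectral_diag A in A_spectral *.
have PV : invmx P = P^t* := invmx_unitary (spectral_unitarymx A).
have D_le j : D 0 j <= r.
  apply: ev_le; last exact: spectral_diag_eigenvalue.
  exact: (mxOverP (hermitian_spectral_diag_real A_herm)).
pose u := x *m P^t*.
have u_adj : u^t* = P *m x^t* by rewrite /u trmx_mul map_mxM trmxCK.
have -> : x *m A *m x^t* = u *m diag_mx D *m u^t*.
  by rewrite u_adj {1}A_spectral PV /u !mulmxA.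
have -> : x *m x^t* = u *m u^t*.
  by rewrite u_adj /u -mulmxA (mulmxA _ P) -PV mulVmx ?spectral_unit // mul1mx.
rewrite mul_mx_diag !mxE mulr_sumr; apply: ler_sum => j _.
by rewrite !mxE mulrAC [X in _ <= X]mulrC ler_wpM2l ?mul_conjC_ge0.
Qed.

Lemma symmetric_form_le (R : realType) n (B : 'M[R]_n) (rho : R) :
  B^T = B -> (forall a, eigenvalue B a -> a <= rho) ->
  forall x : 'cV_n, dot x (B *m x) <= rho * sqnorm x.
Proof.
move=> B_sym ev_le x.
pose toC := real_complex R; pose xc := map_mx toC x^T.
have toC_real r : toC r \is Num.real by apply/complex_realP; exists r.
have xc_adj : xc^t* = xc^T.
  by apply: realmxC; apply/mxOverP => i j; rewrite !mxE.
have Bc_herm : map_mx toC B \is hermsymmx.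
  apply: realsym_hermsym; last by apply/mxOverP => i j; rewrite mxE.
  apply/is_hermitianmxP; rewrite expr0 scale1r; apply/matrixP => i j.
  by rewrite !mxE -{1}B_sym mxE.
have ev_leC a : a \is Num.real -> eigenvalue (map_mx toC B) a -> a <= toC rho.
  by move=> /RRe_real <-; rewrite eigenvalue_map lecR; exact: ev_le.
have xc_form : (xc *m map_mx toC B *m xc^t*) 0 0 = toC (dot x (B *m x)).
  by rewrite xc_adj /xc map_trmx trmxK -!map_mxM [LHS]mxE /dot mulmxA.
have xc_norm : (xc *m xc^t*) 0 0 = toC (sqnorm x).
  by rewrite xc_adj /xc map_trmx trmxK -map_mxM [LHS]mxE sqnormE.
have := hermitian_form_le xc Bc_herm ev_leC.
by rewrite xc_form xc_norm -rmorphM lecR.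
Qed.

End SpectralBound.

Lemma psd_cross_ge (R : realType) n (S : 'M[R]_n) (rho eta : R) (u v : 'cV[R]_n) :
  S^T = S -> psd S -> (forall x, dot x (S *m x) <= rho * sqnorm x) -> 0 < eta ->
  0 <= 2 * dot u (S *m v) + eta * sqnorm u + rho ^+ 2 / eta * sqnorm v.
Proof.
move=> S_sym S_psd S_le eta_gt0.
have quad t : 0 <= t ^+ 2 * dot u (S *m u) + 2 * t * dot u (S *m v) + dot v (S *m v).
  have := S_psd (t *: u + v); rewrite wsqnormE mulmxDr -scalemxAr.
  rewrite !dotDl !dotDr !dotZl !dotZr (dotC v) dot_trmx S_sym; lra.
have [Su_le Sv_le] := (S_le u, S_le v).
have v_term : 0 <= rho ^+ 2 / eta * sqnorm v.
  exact: mulr_ge0 (divr_ge0 (sqr_ge0 _) (ltW eta_gt0)) (sqnorm_ge0 v).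
case: (lerP rho 0) => [rho_le0 | rho_gt0].
  by have := quad 1; have := sqnorm_ge0 u; have := sqnorm_ge0 v; nra.
pose t := eta / rho.
have -> : 2 * dot u (S *m v) + eta * sqnorm u + rho ^+ 2 / eta * sqnorm v
    = rho / eta * (t ^+ 2 * rho * sqnorm u + 2 * t * dot u (S *m v) + rho * sqnorm v).
  by rewrite /t; field; rewrite !gt_eqF.
apply: mulr_ge0; first exact: divr_ge0 (ltW rho_gt0) (ltW eta_gt0).
have := quad t; have := ler_wpM2l (sqr_ge0 t) Su_le; lra.
Qed.

Section PrimalDualStep.
Variables (R : realType) (n p : nat) (f : 'I_n -> R -> R) (m L : R).
Variables (A : 'M[R]_(p, n)) (B : 'M[R]_n) (rho : R).
Variables (xstar : 'cV[R]_n) (lamstar : 'cV[R]_p).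
Variables (alpha beta eta2 eta3 : R).
Hypothesis f'_derivable : forall i x, derivable (derive1 (f i)) x 1.
Hypothesis f''_bounded : forall i x, m <= derive1n 2 (f i) x <= L.
Hypothesis m_ge0 : 0 <= m.
Hypotheses (B_sym : B^T = B) (B_psd : psd B).
Hypothesis B_eigen_le : forall a, eigenvalue B a -> a <= rho.
Hypotheses (Axstar : A *m xstar = 0) (Bxstar : B *m xstar = 0).
Hypothesis kkt : grad f xstar + A^T *m lamstar = 0.
Hypotheses (alpha_gt0 : 0 < alpha) (beta_gt0 : 0 < beta).
Hypotheses (eta2_gt0 : 0 < eta2) (eta3_gt0 : 0 < eta3).

Lemma primal_dual_step_le (y xk z : 'cV[R]_n) (lam lam' : 'cV[R]_p) :
  z = y - alpha *: grad f y - alpha *: (A^T *m lam) - alpha *: (B *m xk) ->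
  lam' = lam + beta *: (A *m z) ->
  wsqnorm ((2 * alpha * m - alpha * (eta2 + eta3) - alpha * rho)%:M
           - (alpha * beta) *: (A^T *m A)) (z - xstar)
    + (1 - alpha * L ^+ 2 / eta2) * sqnorm (z - y)
    + alpha * rho * (1 - rho / eta3) * sqnorm (xk - xstar)
  <= sqnorm (y - xstar) - (1 + alpha * rho) * sqnorm (z - xstar)
     + alpha / beta * sqnorm (lam - lamstar) - alpha / beta * sqnorm (lam' - lamstar)
     + alpha * rho * sqnorm (xk - xstar).
Proof.
move=> z_def lam'_def.
set e := z - xstar; set d := xk - xstar; set w := z - y; set mu := lam - lamstar.
set g := grad f y - grad f xstar.
have w_eq : w = - alpha *: (g + A^T *m mu + B *m d).
  have gstar : grad f xstar = - (A^T *m lamstar) by apply/eqP; rewrite -addr_eq0 kkt.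
  rewrite /w z_def /g /mu /d gstar !mulmxBr Bxstar.
  by apply/matrixP => i j; rewrite !mxE; ring.
have y_eq : y - xstar = e - w by rewrite /e /w; apply/matrixP => i j; rewrite !mxE; ring.
have lam'_eq : lam' - lamstar = mu + beta *: (A *m e).
  rewrite lam'_def /mu /e mulmxBr Axstar subr0.
  by apply/matrixP => i j; rewrite !mxE; ring.
have ew : dot e w = - alpha * (dot e g + dot (A *m e) mu + dot e (B *m d)).
  by rewrite w_eq dotZr 2!dotDr dot_trmx trmxK.
have dual : alpha / beta * sqnorm (mu + beta *: (A *m e))
    = alpha / beta * sqnorm mu + 2 * alpha * dot (A *m e) mu
      + alpha * beta * sqnorm (A *m e).
  by rewrite sqnormD dotZr sqnormZ (dotC mu); field; rewrite gt_eqF.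
have primal := grad_cross_ge f'_derivable f''_bounded m_ge0 y xstar e eta2_gt0.
have cross := psd_cross_ge e d B_sym B_psd (symmetric_form_le B_sym B_eigen_le) eta3_gt0.
have e_w : e - (y - xstar) = w by rewrite y_eq; apply/matrixP => i j; rewrite !mxE; ring.
rewrite e_w -/g in primal.
rewrite y_eq lam'_eq wsqnorm_scalar_sub_gram sqnormB ew dual.
have := mulr_ge0 (ltW alpha_gt0) primal; have := mulr_ge0 (ltW alpha_gt0) cross.
lra.
Qed.

End PrimalDualStep.

Theorem lemma3p10 (R : realType) (n eps : nat)
  (ends : 'I_eps -> 'I_n * 'I_n) (f : 'I_n -> R -> R) (m L : R)
  (B : 'M[R]_n) (rhoB : R) (xstar : 'cV[R]_n) (lamstar : 'cV[R]_eps)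
  (alpha beta : R) (T : nat) (x0 : 'cV[R]_n) (eta2 eta3 : R) (k : nat) :
  simple_connected_graph ends ->
  0 < m -> m <= L ->
  (forall i x, derivable (f i) x 1 /\ derivable (derive1 (f i)) x 1) ->
  (forall i x, m <= derive1n 2 (f i) x <= L) ->
  B^T = B -> psd B ->
  (forall v : 'cV[R]_n, B *m v = 0 <-> incidence R ends *m v = 0) ->
  (forall i j, i != j -> B i j != 0 -> adj ends i j) ->
  largest_eigenvalue B rhoB -> rhoB < m ->
  incidence R ends *m xstar = 0 ->
  (forall x, incidence R ends *m x = 0 -> fsum f xstar <= fsum f x) ->
  grad f xstar + (incidence R ends)^T *m lamstar = 0 ->
  B *m xstar = 0 ->
  (exists y : 'cV[R]_n, lamstar = incidence R ends *m y) ->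
  0 < alpha -> 0 < beta -> (1 <= T)%N -> 0 < eta2 -> 0 < eta3 ->
  let A := incidence R ends in
  let xk := (flexpd f A B alpha beta T x0 k).1 in
  let lamk := (flexpd f A B alpha beta T x0 k).2 in
  let lamk1 := (flexpd f A B alpha beta T x0 k.+1).2 in
  let xT := inner f A B alpha xk lamk T in
  let xT1 := inner f A B alpha xk lamk T.-1 in
  let PG := (2 * alpha * m - alpha * (eta2 + eta3) - alpha * rhoB)%:M
            - (alpha * beta) *: (A^T *m A) in
  let c1 := 1 + alpha * rhoB in
  let c2 := 1 - alpha * L ^+ 2 / eta2 in
  let c3 := alpha * rhoB * (1 - rhoB / eta3) in
  wsqnorm PG (xT - xstar) + c2 * sqnorm (xT - xT1) + c3 * sqnorm (xk - xstar)
  <= sqnorm (xT1 - xstar) - c1 * sqnorm (xT - xstar)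
     + alpha / beta * sqnorm (lamk - lamstar) - alpha / beta * sqnorm (lamk1 - lamstar)
     + alpha * rhoB * sqnorm (xk - xstar).
Proof.
move=> _ m_gt0 _ f_derivable f''_bounded B_sym B_psd _ _ [_ B_eigen_le] _
  Axstar _ kkt Bxstar _ alpha_gt0 beta_gt0.
case: T => [//|T] _ eta2_gt0 eta3_gt0.
exact: (primal_dual_step_le (fun i x => (f_derivable i x).2) f''_bounded (ltW m_gt0)
  B_sym B_psd B_eigen_le Axstar Bxstar kkt alpha_gt0 beta_gt0 eta2_gt0 eta3_gt0
  erefl erefl).
Qed.
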